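(* Let $a,b,g,h>0$ with $h>g+b+a$. Then the Minkowskian planar 4R linkage with these link lengths is of crank–superrocker type.
   Context: Link lengths: $a$ input crank, $b$ output crank, $g$ ground (fixed link), $h$ coupler. Put $T_1=g+b-h-a$, $T_2=a-g+b-h$, $T_3=g-a-b-h$, $T_4=g-a+b+h$, $T_5=a-h+g+b$. The input crank is a crank if $T_1T_2\ge0$ and $T_3T_4\le0$, a rocker if $T_1T_2<0$ and $T_3T_4\le0$, and a superrocker if $T_1T_2<0$ and $T_3T_4>0$. The output crank is a crank if $T_1\ge0$ and $T_4T_5\ge0$, a rocker if $T_1<0$ and $T_4T_5\ge0$, and a superrocker if $T_1<0$ and $T_4T_5<0$. The linkage is of type ''X–Y'' if its input crank is of type X and its output crank of type Y. *)

From mathcomp Require Import all_boot all_order all_algebra.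
Set Implicit Arguments. Unset Strict Implicit. Unset Printing Implicit Defensive.
Import Order.TTheory GRing.Theory Num.Theory.
Local Open Scope ring_scope.

Inductive crank_kind := Crank | Rocker | Superrocker.

Section Linkage.
Variable R : realFieldType.
(* a input crank, b output crank, g ground, h coupler *)
Definition T1 (a b g h : R) := g + b - h - a.
Definition T2 (a b g h : R) := a - g + b - h.
Definition T3 (a b g h : R) := g - a - b - h.
Definition T4 (a b g h : R) := g - a + b + h.
Definition T5 (a b g h : R) := a - h + g + b.

Definition input_kind (a b g h : R) (k : crank_kind) : Prop :=
  match k with
  | Crank => 0 <= T1 a b g h * T2 a b g h /\ T3 a b g h * T4 a b g h <= 0
  | Rocker => T1 a b g h * T2 a b g h < 0 /\ T3 a b g h * T4 a b g h <= 0
  | Superrocker => T1 a b g h * T2 a b g h < 0 /\ 0 < T3 a b g h * T4 a b g h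
  end.

Definition output_kind (a b g h : R) (k : crank_kind) : Prop :=
  match k with
  | Crank => 0 <= T1 a b g h /\ 0 <= T4 a b g h * T5 a b g h
  | Rocker => T1 a b g h < 0 /\ 0 <= T4 a b g h * T5 a b g h
  | Superrocker => T1 a b g h < 0 /\ T4 a b g h * T5 a b g h < 0
  end.

Definition linkage_type (a b g h : R) (X Y : crank_kind) : Prop :=
  input_kind a b g h X /\ output_kind a b g h Y.
End Linkage.

From mathcomp Require Import all_boot all_order all_algebra.
From mathcomp Require Import lra.
Import Order.TTheory GRing.Theory Num.Theory.
Local Open Scope ring_scope.

(* A coupler longer than the other three links together makes [T1], [T2], [T3]
   and [T5] negative and [T4] positive; the product signs then read off as
   crank for the input and superrocker for the output. *)

Section SignConditions.
Variables (R : realFieldType) (a b g h : R).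

Lemma input_crank_of_signs :
  T1 a b g h <= 0 -> T2 a b g h <= 0 -> T3 a b g h <= 0 -> 0 <= T4 a b g h ->
  input_kind a b g h Crank.
Proof. by move=> ? ? ? ?; split; [rewrite mulr_le0 | rewrite mulr_le0_ge0]. Qed.

Lemma output_superrocker_of_signs :
  T1 a b g h < 0 -> 0 < T4 a b g h -> T5 a b g h < 0 ->
  output_kind a b g h Superrocker.
Proof. by move=> ? ? ?; split; rewrite // pmulr_rlt0. Qed.

End SignConditions.

Theorem mainTheorem11 (R : realFieldType) (a b g h : R)
  (ha : 0 < a) (hb : 0 < b) (hg : 0 < g) (hh : 0 < h)
  (hgt : g + b + a < h) :
  linkage_type a b g h Crank Superrocker.
Proof.
have T1_lt0 : T1 a b g h < 0 by rewrite /T1; lra.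
have T2_lt0 : T2 a b g h < 0 by rewrite /T2; lra.
have T3_lt0 : T3 a b g h < 0 by rewrite /T3; lra.
have T4_gt0 : 0 < T4 a b g h by rewrite /T4; lra.
have T5_lt0 : T5 a b g h < 0 by rewrite /T5; lra.
split.
- by apply: input_crank_of_signs; apply: ltW.
- exact: output_superrocker_of_signs.
Qed.
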